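(* For every $\varepsilon\in(0,1)$ and $\ell\in\mathbb{N}$ there is $d_0=d_0(\varepsilon,\ell)$ such that for every $m\in\mathbb{N}$ and every time series $x\in\mathbb{R}^m$ there exists a time series $y\in\mathbb{R}^{d_0}$ such that for every $z\in\mathbb{R}^\ell$, \[(1-\varepsilon)\,d_{dF}(x,z)\le d_{dF}(y,z)\le(1+\varepsilon)\,d_{dF}(x,z).\]
   Context: A time series of complexity $m$ is a vector $x=(x_1,\dots,x_m)\in\mathbb{R}^m$. For $x\in\mathbb{R}^m$ and $y\in\mathbb{R}^\ell$, a traversal is a sequence of index pairs $(i,j)\in[m]\times[\ell]$ starting at $(1,1)$, ending at $(m,\ell)$, in which each pair $(i,j)$ is followed by one of $(i,j+1)$, $(i+1,j)$, $(i+1,j+1)$. The discrete Fréchet distance $d_{dF}(x,y)$ is the minimum over all traversals $T$ of $\max_{(i,j)\in T}|x_i-y_j|$. *)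

From HB Require Import structures.
From mathcomp Require Import all_boot all_order all_algebra.
From mathcomp Require Import all_classical all_reals.
Set Implicit Arguments. Unset Strict Implicit. Unset Printing Implicit Defensive.
Import Order.TTheory GRing.Theory Num.Theory.
Local Open Scope ring_scope.
Local Open Scope classical_set_scope.

(* A time series of complexity m: x = (x_1,...,x_m), here indexed 0..m-1. *)
Definition tseries (R : realType) (m : nat) := 'I_m -> R.

Definition trav_step (p q : nat * nat) : bool :=
  [|| q == (p.1, p.2.+1), q == (p.1.+1, p.2) | q == (p.1.+1, p.2.+1)].

Definition is_traversal (m l : nat) (T : seq (nat * nat)) : bool :=
  match T with
  | [::] => false
  | p :: T' => [&& p == (0%N, 0%N), path trav_step p T' &
                    last p T' == (m.-1, l.-1)]
  end.

(* Value of a series at a nat index (0 outside range; never used on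
   traversals since they stay in range). *)
Definition tval (R : realType) (m : nat) (x : tseries R m) (i : nat) : R :=
  match insub i with Some i' => x i' | None => 0 end.

Definition trav_cost (R : realType) (m l : nat) (x : tseries R m)
  (y : tseries R l) (T : seq (nat * nat)) : R :=
  \big[Order.max/0]_(p <- T) `|tval x p.1 - tval y p.2|.

(* Discrete Frechet distance: the minimum (infimum over the finite
   nonempty set of traversals) of the traversal costs. *)
Definition dF (R : realType) (m l : nat) (x : tseries R m) (y : tseries R l) : R :=
  inf [set trav_cost x y T | T in [set T | is_traversal m l T]].

From Pilot Require Import Defs.
From HB Require Import structures.
From mathcomp Require Import all_boot all_order all_algebra.
From mathcomp Require Import all_classical all_reals.
From mathcomp Require Import zify lra ring.
Import Order.TTheory GRing.Theory Num.Theory.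
Set Implicit Arguments. Unset Strict Implicit. Unset Printing Implicit Defensive.

(* Fix z and a threshold d.  Whether some traversal of x and z costs at most d
   depends only on the boolean table (i, t) |-> [|x_i - z_t| <= d], and can be
   decided row by row: each row contributes the relation "columns j0..j1 are all
   admissible" on the columns of z, and consecutive rows are composed through a
   column step.  If x is spelled by a word over a finite alphabet (x_i = phi (w_i)),
   the composite, taken as a function of the table of the alphabet, is an invariant
   of w with values in a finite set; it is a right congruence, so by pigeonhole
   every word has an equivalent word of one fixed length d0, and that word spells
   a series y with dF(y, z) = dF(x, z) for all z.
   A general x is first rounded to such an alphabet.  With g the infimum of
   dF(x, .), match x to some z0 at distance < 2g and round every x_i - z0_j to a
   grid of mesh eps * g; this moves each dF(x, z) by at most eps * g, which is at
   most eps * dF(x, z).  If g = 0, x already takes at most l values. *)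

(** * Traversals as staircases *)

Lemma trav_path_bounds p T : path trav_step p T -> forall q, q \in p :: T ->
  [&& (p.1 <= q.1)%N, (q.1 <= (last p T).1)%N, (p.2 <= q.2)%N & (q.2 <= (last p T).2)%N].
Proof.
elim: T p => [|r T IH] p /=.
  by move=> _ q; rewrite inE => /eqP ->; rewrite !leqnn.
move=> /andP[step_pr path_r] q; rewrite inE => /orP[/eqP ->|q_in].
  have /and4P[_ r1_le _ r2_le] := IH r path_r r (mem_head _ _).
  by move: step_pr r1_le r2_le => /or3P[] /eqP -> /= *; apply/and4P; split => //; lia.
have /and4P[] := IH r path_r q q_in.
by move: step_pr => /or3P[] /eqP -> /= *; apply/and4P; split => //; lia.
Qed.

Lemma trav_path_cover p T i : path trav_step p T -> (p.1 <= i <= (last p T).1)%N ->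
  exists2 q, q \in p :: T & q.1 = i.
Proof.
elim: T p => [|r T IH] p /=.
  by move=> _ i_p; exists p; rewrite ?mem_head //; apply/eqP; rewrite eqn_leq.
move=> /andP[step_pr path_r] /andP[p_le_i i_le].
case: (ltnP i r.1) => [i_lt_r|r_le_i].
  exists p; first by rewrite mem_head.
  by move: step_pr i_lt_r; rewrite /trav_step => /or3P[] /eqP -> /=; lia.
have [q q_in <-] := IH r path_r (introT andP (conj r_le_i i_le)).
by exists q; rewrite // inE q_in orbT.
Qed.

(* [staircase cell n i j0 j1]: a traversal-like path from (i, j0) to (i + n, j1)
   through cells satisfying [cell], described row by row: it covers the columns
   [j0, j] of row i and then enters row i + 1 at column j or j + 1. *)
Fixpoint staircase (cell : nat -> nat -> bool) (n i j0 j1 : nat) : Prop :=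
  match n with
  | 0 => (j0 <= j1)%N /\ forall t, (j0 <= t <= j1)%N -> cell i t
  | n'.+1 => exists j j', [/\ (j0 <= j)%N, forall t, (j0 <= t <= j)%N -> cell i t,
                (j' == j) || (j' == j.+1) & staircase cell n' i.+1 j' j1]
  end.

Section Staircase.
Variable cell : nat -> nat -> bool.

Lemma staircase_start n i j0 j1 : staircase cell n i j0 j1 -> cell i j0.
Proof.
case: n => [|n] /=; first by move=> [j0_le cell_row]; apply: cell_row; rewrite leqnn.
by move=> [j [j' [j0_le cell_row _ _]]]; apply: cell_row; rewrite leqnn.
Qed.

Lemma staircase_extl n i j j1 :
  cell i j -> staircase cell n i j.+1 j1 -> staircase cell n i j j1.
Proof.
have extl k : cell i j -> (forall t, (j < t <= k)%N -> cell i t) ->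
    forall t, (j <= t <= k)%N -> cell i t.
  move=> cell_j cell_row t /andP[]; rewrite leq_eqVlt => /orP[/eqP <- //|j_lt t_le].
  by apply: cell_row; rewrite j_lt.
case: n => [|n] /= cell_j; first by move=> [j_lt cell_row]; split; [lia | exact: extl].
by move=> [k [k' [j_lt cell_row step rest]]]; exists k, k'; split; [lia | exact: extl | |].
Qed.

Lemma staircase_of_path p T : path trav_step p T -> all (fun q => cell q.1 q.2) (p :: T) ->
  staircase cell ((last p T).1 - p.1) p.1 p.2 (last p T).2.
Proof.
elim: T p => [|r T IH] p /=.
  move=> _ /andP[cell_p _]; rewrite subnn; split => // t t_p.
  by have -> : t = p.2 by lia.
move=> /andP[step_pr path_r] /andP[cell_p all_r].
have := IH r path_r all_r; have /and4P[_ r_le _ _] := trav_path_bounds path_r (mem_head _ _).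
move: step_pr r_le; rewrite /trav_step => /or3P[] /eqP -> /=.
  by move=> _; exact: staircase_extl.
all: case: (last _ T) => a b /= r_le rest; have -> : (a - p.1 = (a - p.1.+1).+1)%N by lia.
all: exists p.2; eexists; split; last exact: rest; rewrite ?eqxx ?orbT //.
all: by move=> t t_p; have -> : t = p.2 by lia.
Qed.

Lemma path_of_row i j k X : (forall t, (j <= t <= j + k)%N -> cell i t) ->
  (exists T, [/\ path trav_step (i, j + k) T, last (i, j + k) T = X &
     all (fun q => cell q.1 q.2) ((i, j + k) :: T)]) ->
  exists T, [/\ path trav_step (i, j) T, last (i, j) T = X &
     all (fun q => cell q.1 q.2) ((i, j) :: T)].
Proof.
elim: k j => [|k IH] j cell_row; first by rewrite addn0.
rewrite -addSnnS => /IH [|T [path_T last_T all_T]]; first by move=> t t_j; apply: cell_row; lia.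
exists ((i, j.+1) :: T); split => //=; first by rewrite /trav_step /= eqxx path_T.
by rewrite cell_row ?leqnn ?leq_addr.
Qed.

Lemma path_of_staircase n i j0 j1 : staircase cell n i j0 j1 ->
  exists T, [/\ path trav_step (i, j0) T, last (i, j0) T = (i + n, j1)%N &
     all (fun q => cell q.1 q.2) ((i, j0) :: T)].
Proof.
elim: n i j0 => [|n IH] i j0 /=.
  move=> [j0_le cell_row]; apply: (@path_of_row i j0 (j1 - j0)); rewrite subnKC //.
  by exists [::]; rewrite /= addn0 cell_row ?leqnn ?j0_le.
move=> [j [j' [j0_le cell_row step /IH [T [path_T last_T all_T]]]]].
apply: (@path_of_row i j0 (j - j0)); rewrite subnKC //.
exists ((i.+1, j') :: T); split => /=.
- by rewrite path_T andbT /trav_step /=; case/orP: step => /eqP ->; rewrite eqxx ?orbT.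
- by rewrite last_T addSnnS.
- by rewrite cell_row ?leqnn ?j0_le.
Qed.

End Staircase.

Lemma eq_staircase (cell1 cell2 : nat -> nat -> bool) n i j0 j1 :
  (forall k, (k <= n)%N -> cell1 (i + k) =1 cell2 (i + k)) ->
  staircase cell1 n i j0 j1 -> staircase cell2 n i j0 j1.
Proof.
elim: n i j0 => [|n IH] i j0 /= cell12.
all: have := cell12 0%N (leq0n _); rewrite addn0 => cell12_i.
  by move=> [j0_le row_ok]; split => // t /row_ok; rewrite cell12_i.
move=> [j [j' [j0_le row_ok step rest]]]; exists j, j'; split => //.
  by move=> t /row_ok; rewrite cell12_i.
by apply: IH rest => k k_le; rewrite addSnnS; apply: cell12.
Qed.

Lemma staircase_below n i j0 j1 l : (j0 <= j1 < l)%N ->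
  staircase (fun _ t => (t < l)%N) n i j0 j1.
Proof.
elim: n i j0 => [|n IH] i j0 /= /andP[j0_le j1_lt]; first by split => // t; lia.
exists j0, j0; split; rewrite ?eqxx //; first by move=> t; lia.
by apply: IH; rewrite j0_le.
Qed.

Lemma traversal_exists m l : (0 < m)%N -> (0 < l)%N -> exists T, is_traversal m l T.
Proof.
move=> m_gt0 l_gt0.
have [|T [path_T last_T _]] := path_of_staircase (@staircase_below m.-1 0 0 l.-1 l _).
  by apply/andP; split; lia.
by exists ((0, 0)%N :: T); rewrite /is_traversal eqxx path_T last_T add0n eqxx.
Qed.

(** * Keys of words *)

Lemma right_congr_shorten (A : Type) (T : finType) (F : seq A -> T) :
  (forall s1 s2 w, F s1 = F s2 -> F (s1 ++ w) = F (s2 ++ w)) ->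
  forall s, exists2 s', (size s' < #|T|)%N & F s' = F s.
Proof.
move=> F_congr s; have [n] := ubnP (size s); elim: n s => // n IH s size_s.
case: (ltnP (size s) #|T|) => [small | large]; first by exists s.
pose G (k : 'I_(size s).+1) := F (take k s).
have /injectivePn [k1 [k2 k12 G12]] : ~~ injectiveb G.
  by apply/injectiveP => /leq_card; rewrite card_ord ltnNge large.
wlog k1_lt : k1 k2 k12 G12 / (k1 < k2)%N.
  move=> W; case: (ltngtP k1 k2) => [|k21|/val_inj k1E]; first exact: W.
    by apply: (W k2 k1) => //; rewrite eq_sym.
  by rewrite k1E eqxx in k12.
have k2_le : (k2 <= size s)%N by rewrite -ltnS.
have [|s' s'_small Fs'] := IH (take k1 s ++ drop k2 s).
  by rewrite size_cat size_takel ?size_drop; lia.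
by exists s'; rewrite // Fs' -[s in RHS](cat_take_drop k2); apply: F_congr.
Qed.

Section WordKey.
Variables (A : finType) (l : nat).
Implicit Types (M : {ffun A * 'I_l -> bool}) (a b : A) (s w : seq A) (K : {set 'I_l * 'I_l}).

Definition row_key M a : {set 'I_l * 'I_l} :=
  [set p : 'I_l * 'I_l | (p.1 <= p.2)%N && [forall t : 'I_l, (p.1 <= t <= p.2)%N ==> M (a, t)]].

Definition col_step (j j' : 'I_l) : bool := (j' == j :> nat) || (j' == j.+1 :> nat).

Definition key_comp K1 K2 : {set 'I_l * 'I_l} :=
  [set p : 'I_l * 'I_l |
    [exists j, exists j', [&& (p.1, j) \in K1, col_step j j' & (j', p.2) \in K2]]].

Fixpoint word_key M a s : {set 'I_l * 'I_l} :=
  if s is b :: s' then key_comp (row_key M a) (word_key M b s') else row_key M a.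

Lemma key_compA : associative key_comp.
Proof.
move=> K1 K2 K3; apply/setP => -[j0 j1]; rewrite !inE /=; apply/idP/idP.
  move=> /existsP[k /existsP[k' /and3P[K1_k step_k]]].
  rewrite inE /= => /existsP[j /existsP[j' /and3P[K2_k step_j K3_j]]].
  apply/existsP; exists j; apply/existsP; exists j'; rewrite step_j K3_j !andbT inE /=.
  by apply/existsP; exists k; apply/existsP; exists k'; rewrite K1_k step_k K2_k.
move=> /existsP[j /existsP[j' /and3P[]]].
rewrite inE /= => /existsP[k /existsP[k' /and3P[K1_k step_k K2_k]]] step_j K3_j.
apply/existsP; exists k; apply/existsP; exists k'; rewrite K1_k step_k inE /=.
by apply/existsP; exists j; apply/existsP; exists j'; rewrite K2_k step_j K3_j.
Qed.

Lemma word_key_cat M a s b w :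
  word_key M a (s ++ b :: w) = key_comp (word_key M a s) (word_key M b w).
Proof. by elim: s a => [|c s IH] a //=; rewrite IH -key_compA. Qed.

Lemma row_key_idem M a : key_comp (row_key M a) (row_key M a) = row_key M a.
Proof.
apply/setP => -[j0 j1]; rewrite !inE /=; apply/idP/idP.
  move=> /existsP[j /existsP[j' /and3P[]]].
  rewrite !inE /= => /andP[j0_le /forallP row1] step /andP[j'_le /forallP row2].
  have j0_j1 : (j0 <= j1)%N by move: step => /orP[] /eqP; lia.
  rewrite j0_j1; apply/forallP => t; apply/implyP => /andP[j0_t t_j1].
  case: (leqP t j) => [t_j | j_t].
    by have := row1 t; rewrite j0_t t_j.
  by have := row2 t; rewrite t_j1 andbT; apply: implyP; move: step => /orP[] /eqP; lia.
move=> /andP[j0_le /forallP row]; apply/existsP; exists j0; apply/existsP; exists j0.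
rewrite /col_step eqxx !inE /= leqnn j0_le /=.
apply/andP; split; apply/forallP => t; apply/implyP => t_in; have := row t.
  by move: t_in => /andP[j0_t t_j0]; rewrite j0_t (leq_trans t_j0 j0_le).
by rewrite t_in.
Qed.

Lemma word_key_nseq M a k s : word_key M a (nseq k a ++ s) = word_key M a s.
Proof.
elim: k => [|k IH] //=; rewrite -IH.
by case: (nseq k a ++ s) => [|b s'] /=; rewrite ?row_key_idem // key_compA row_key_idem.
Qed.

Definition key_cell M (f : nat -> A) (k t : nat) : bool :=
  if insub t is Some t' then M (f k, t') else false.

Lemma key_cell_lt M f k t : key_cell M f k t -> (t < l)%N.
Proof. by rewrite /key_cell; case: insubP. Qed.

Lemma key_cellE M f k (t : 'I_l) : key_cell M f k t = M (f k, t).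
Proof. by rewrite /key_cell valK. Qed.

Lemma row_cellsP M f i (j0 j : 'I_l) :
  (forall t, (j0 <= t <= j)%N -> key_cell M f i t) <->
  [forall t : 'I_l, (j0 <= t <= j)%N ==> M (f i, t)].
Proof.
split => [row_ok | /forallP row_ok t t_in].
  by apply/forallP => t; apply/implyP => /row_ok; rewrite key_cellE.
have t_lt : (t < l)%N by apply: leq_ltn_trans (ltn_ord j); case/andP: t_in.
by have := row_ok (Ordinal t_lt); rewrite -[t]/(val (Ordinal t_lt)) key_cellE t_in.
Qed.

Lemma staircase_word_key M f n i (j0 j1 : 'I_l) :
  staircase (key_cell M f) n i j0 j1 <->
  (j0, j1) \in word_key M (f i) [seq f k | k <- iota i.+1 n].
Proof.
elim: n i j0 j1 => [|n IH] i j0 j1 /=; rewrite inE /=.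
  split => [[j0_le /row_cellsP ->]|/andP[j0_le /row_cellsP]] //; by rewrite j0_le.
split => [[j [j' [j0_le row_ok step rest]]]|].
  have j_lt : (j < l)%N by apply: (key_cell_lt (k := i)); apply: row_ok; rewrite j0_le leqnn.
  have j'_lt : (j' < l)%N by apply: (key_cell_lt (k := i.+1)); apply: staircase_start rest.
  apply/existsP; exists (Ordinal j_lt); apply/existsP; exists (Ordinal j'_lt).
  rewrite inE /= j0_le (proj1 (row_cellsP M f i j0 (Ordinal j_lt)) row_ok) /=.
  by rewrite [col_step _ _]step; apply/IH.
move=> /existsP[j /existsP[j' /and3P[]]]; rewrite inE /= => /andP[j0_le row_ok] step rest.
by exists j, j'; split => //; [exact/row_cellsP | exact/IH].
Qed.

Definition key_bound := #|{: {ffun {ffun A * 'I_l -> bool} -> {set 'I_l * 'I_l}}}|.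

Lemma key_bound_gt0 : (0 < key_bound)%N.
Proof. by apply/card_gt0P; exists [ffun=> finset.set0]. Qed.

Lemma word_key_pad a s :
  exists s', size s' = key_bound.-1 /\ forall M, word_key M a s' = word_key M a s.
Proof.
pose F w : {ffun {ffun A * 'I_l -> bool} -> {set 'I_l * 'I_l}} := [ffun M => word_key M a w].
have [|s1 s1_small F1] := @right_congr_shorten _ _ F _ s.
  move=> s1 s2 [|b w] F12; first by rewrite !cats0.
  apply/ffunP => M; rewrite !ffunE !word_key_cat.
  by move/ffunP: F12 => /(_ M); rewrite !ffunE => ->.
exists (nseq (key_bound.-1 - size s1) a ++ s1); split.
  by rewrite size_cat size_nseq subnK // -ltnS (ltn_predK s1_small).
by move=> M; rewrite word_key_nseq; move/ffunP: F1 => /(_ M); rewrite !ffunE.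
Qed.

End WordKey.

(** * Fréchet distance *)

Local Open Scope ring_scope.
Local Open Scope classical_set_scope.

Lemma tvalE (R : realType) m (x : tseries R m) (i : 'I_m) : Defs.tval x i = x i.
Proof. by rewrite /Defs.tval valK. Qed.

Section FrechetDistance.
Variables (R : realType) (l : nat).
Implicit Types (m : nat) (z : tseries R l) (T : seq (nat * nat)) (d e : R).

Lemma trav_cost_ge0 m (x : tseries R m) z T : 0 <= trav_cost x z T.
Proof. exact: bigmax_ge_id. Qed.

Lemma trav_cost_ub m (x : tseries R m) z T q :
  q \in T -> `|Defs.tval x q.1 - Defs.tval z q.2| <= trav_cost x z T.
Proof.
by move=> q_in; apply: (le_bigmax_seq _ _ xpredT (fun p => `|Defs.tval x p.1 - Defs.tval z p.2|)).
Qed.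

Lemma trav_cost_le m (x : tseries R m) z T d : 0 <= d ->
  (forall q, q \in T -> `|Defs.tval x q.1 - Defs.tval z q.2| <= d) -> trav_cost x z T <= d.
Proof. by move=> d_ge0 le_d; rewrite /trav_cost big_seq; apply: bigmax_le. Qed.

Lemma dF_le_cost m (x : tseries R m) z T : is_traversal m l T -> dF x z <= trav_cost x z T.
Proof.
move=> trav_T; apply: ge_inf; last by exists T.
by exists 0 => _ [T' _ <-]; apply: trav_cost_ge0.
Qed.

Lemma dF_ge m (x : tseries R m) z d : (0 < m)%N -> (0 < l)%N ->
  (forall T, is_traversal m l T -> d <= trav_cost x z T) -> d <= dF x z.
Proof.
move=> m_gt0 l_gt0 le_cost; have [T0 trav_T0] := traversal_exists m_gt0 l_gt0.
apply: lb_le_inf; first by exists (trav_cost x z T0), T0.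
by move=> _ [T trav_T <-]; apply: le_cost.
Qed.

Lemma dF_ge0 m (x : tseries R m) z : (0 < m)%N -> (0 < l)%N -> 0 <= dF x z.
Proof. by move=> m_gt0 l_gt0; apply: dF_ge => // T _; apply: trav_cost_ge0. Qed.

Lemma dF_perturb m (x1 x2 : tseries R m) z e : (0 < m)%N -> (0 < l)%N ->
  (forall i, `|x1 i - x2 i| <= e) -> dF x1 z <= dF x2 z + e.
Proof.
move=> m_gt0 l_gt0 x12_le; rewrite -lerBlDr; apply: dF_ge => // T trav_T.
rewrite lerBlDr; apply: le_trans (dF_le_cost _ _ trav_T) _.
have e_ge0 : 0 <= e := le_trans (normr_ge0 _) (x12_le (Ordinal m_gt0)).
apply: trav_cost_le => [|q q_in]; first by rewrite addr_ge0 ?trav_cost_ge0.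
have x12_q : `|Defs.tval x1 q.1 - Defs.tval x2 q.1| <= e.
  by rewrite /Defs.tval; case: insub => [i|]; rewrite ?subrr ?normr0.
apply: le_trans (ler_distD (Defs.tval x2 q.1) _ _) _.
by rewrite addrC lerD ?trav_cost_ub.
Qed.

Definition close_cell m (x : tseries R m) z d (i t : nat) : bool :=
  (t < l)%N && (`|Defs.tval x i - Defs.tval z t| <= d).

Lemma traversal_le_iff_staircase m (x : tseries R m) z d :
  (0 < m)%N -> (0 < l)%N -> 0 <= d ->
  (exists2 T, is_traversal m l T & trav_cost x z T <= d) <->
  staircase (close_cell x z d) m.-1 0 0 l.-1.
Proof.
move=> m_gt0 l_gt0 d_ge0; split.
  move=> [[|p T] //= /and3P[/eqP p0 path_T /eqP last_T] cost_le].
  have all_close : all (fun q => close_cell x z d q.1 q.2) (p :: T).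
    apply/allP => q q_in; rewrite /close_cell (le_trans (trav_cost_ub _ _ q_in)) // andbT.
    by have /and4P[_ _ _] := trav_path_bounds path_T q_in; rewrite last_T /=; lia.
  by have := staircase_of_path path_T all_close; rewrite last_T p0 subn0.
move=> /path_of_staircase [T [path_T last_T all_close]].
exists ((0, 0)%N :: T); first by rewrite /is_traversal eqxx path_T last_T add0n eqxx.
by apply: trav_cost_le => // q /(allP all_close) /andP[].
Qed.

Lemma dF_le_of_staircase m1 m2 (x1 : tseries R m1) (x2 : tseries R m2) z :
  (0 < m1)%N -> (0 < m2)%N -> (0 < l)%N ->
  (forall d, 0 <= d -> staircase (close_cell x2 z d) m2.-1 0 0 l.-1 ->
                       staircase (close_cell x1 z d) m1.-1 0 0 l.-1) ->
  dF x1 z <= dF x2 z.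
Proof.
move=> m1_gt0 m2_gt0 l_gt0 stair12; apply: dF_ge => // T trav_T.
have cost_ge0 := trav_cost_ge0 x2 z T.
have [|T1 trav_T1 cost_le] := proj2 (traversal_le_iff_staircase x1 z m1_gt0 l_gt0 cost_ge0).
  by apply/stair12/(traversal_le_iff_staircase x2 z m2_gt0 l_gt0 cost_ge0) => //; exists T.
exact: le_trans (dF_le_cost _ _ trav_T1) cost_le.
Qed.

Lemma dF_lt_match m (x : tseries R m) z B : (0 < m)%N -> (0 < l)%N ->
  dF x z < B -> exists j : 'I_m -> 'I_l, forall i, `|x i - z (j i)| < B.
Proof.
move=> m_gt0 l_gt0; have [T0 trav_T0] := traversal_exists m_gt0 l_gt0.
case/inf_lt; first by exists (trav_cost x z T0), T0.
move=> _ [[|p T] //= /and3P[/eqP p0 path_T /eqP last_T] <-] cost_lt.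
suff /fin_all_exists : forall i : 'I_m, exists j : 'I_l, `|x i - z j| < B by [].
move=> i.
have [|q q_in q1] := @trav_path_cover p T i path_T.
  by rewrite last_T p0 /=; have := ltn_ord i; lia.
have /and4P[_ _ _] := trav_path_bounds path_T q_in.
rewrite last_T /= -ltnS prednK // => q2_lt.
exists (Ordinal q2_lt); apply: le_lt_trans cost_lt.
by have := trav_cost_ub x z q_in; rewrite q1 -[q.2]/(val (Ordinal q2_lt)) !tvalE.
Qed.

End FrechetDistance.

Section WordSeries.
Variables (R : realType) (A : finType) (l : nat) (phi : A -> R).

Definition threshold_table (z : tseries R l) (d : R) : {ffun A * 'I_l -> bool} :=
  [ffun p => `|phi p.1 - z p.2| <= d].

Lemma close_cell_key (f : nat -> A) m (z : tseries R l) d k : (k < m)%N ->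
  close_cell (fun i : 'I_m => phi (f i)) z d k =1 key_cell (threshold_table z d) f k.
Proof.
move=> k_lt t; rewrite /close_cell /key_cell.
have -> : Defs.tval (fun i : 'I_m => phi (f i)) k = phi (f k).
  by rewrite -[k]/(val (Ordinal k_lt)) tvalE.
rewrite /Defs.tval; case: insubP => [t' _ <-|/negbTE ->] //.
by rewrite ltn_ord ffunE.
Qed.

Lemma staircase_close_word_key (f : nat -> A) m (z : tseries R l) d (j0 j1 : 'I_l) :
  (0 < m)%N ->
  staircase (close_cell (fun i : 'I_m => phi (f i)) z d) m.-1 0 j0 j1 <->
  (j0, j1) \in word_key (threshold_table z d) (f 0%N) [seq f k | k <- iota 1 m.-1].
Proof.
move=> m_gt0; rewrite -staircase_word_key.
by split; apply: eq_staircase => k k_le t; rewrite close_cell_key //; lia.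
Qed.

End WordSeries.

Lemma dF_eq_of_word_key (R : realType) (A : finType) l (phi : A -> R) (f g : nat -> A) m n
    (z : tseries R l.+1) :
  (0 < m)%N -> (0 < n)%N ->
  (forall M : {ffun A * 'I_l.+1 -> bool},
     word_key M (f 0%N) [seq f k | k <- iota 1 m.-1] =
     word_key M (g 0%N) [seq g k | k <- iota 1 n.-1]) ->
  dF (fun i : 'I_m => phi (f i)) z = dF (fun i : 'I_n => phi (g i)) z.
Proof.
move=> m_gt0 n_gt0 same_key.
have keyP d := staircase_close_word_key phi _ z d ord0 ord_max.
apply/eqP; rewrite eq_le; apply/andP; split; apply: dF_le_of_staircase => // d _;
  by rewrite keyP // keyP // same_key.
Qed.

(** * Rounding to a finite alphabet *)

Lemma round_to_grid (R : realType) (s u : R) (N : nat) : 0 < s -> `|u| < N%:R * s ->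
  exists k : 'I_N.*2, `|s * (k%:R - N%:R) - u| <= s.
Proof.
move=> s_gt0; rewrite ltr_norml => /andP[u_gt u_lt].
pose r := u / s + N%:R.
have r_ge0 : 0 <= r by rewrite /r -lerBlDr sub0r ler_pdivlMr //; lra.
have r_lt : r < N.*2%:R by rewrite /r -addnn natrD ltrD2r ltr_pdivrMr.
have k_lt : (Num.truncn r < N.*2)%N by rewrite truncn_lt_nat.
exists (Ordinal k_lt) => /=; have /andP[k_le r_lt1] := truncn_itv r_ge0.
have -> : s * ((Num.truncn r)%:R - N%:R) - u = - (s * (r - (Num.truncn r)%:R)).
  by rewrite /r; field; rewrite gt_eqF.
rewrite normrN ger0_norm ?mulr_ge0 ?subr_ge0 ?(ltW s_gt0) //.
by rewrite -[leRHS]mulr1 ler_pM2l //; rewrite -natr1 in r_lt1; lra.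
Qed.

Definition grid_size (R : realType) (eps : R) : nat := (Num.truncn (2 / eps)).+1.

Section Quantize.
Variables (R : realType) (eps : R) (m l : nat) (x : tseries R m).
Hypotheses (eps_gt0 : 0 < eps) (m_gt0 : (0 < m)%N) (l_gt0 : (0 < l)%N).

Local Notation letter := ('I_l * 'I_(grid_size eps).*2)%type.

Lemma quantize_near (z : tseries R l) g : 0 < g -> dF x z < 2 * g ->
  exists (c : 'I_m -> letter) (phi : letter -> R), forall i, `|phi (c i) - x i| <= eps * g.
Proof.
move=> g_gt0 /(dF_lt_match m_gt0 l_gt0) [j x_near].
have s_gt0 : 0 < eps * g by apply: mulr_gt0.
have grid_wide : 2 * g < (grid_size eps)%:R * (eps * g).
  have : 2 / eps < (grid_size eps)%:R by apply: truncnS_gt.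
  by rewrite ltr_pdivrMr // mulrA ltr_pM2r.
have /fin_all_exists [k k_round] : forall i, exists k : 'I_(grid_size eps).*2,
    `|eps * g * (k%:R - (grid_size eps)%:R) - (x i - z (j i))| <= eps * g.
  by move=> i; apply: round_to_grid => //; apply: lt_trans (x_near i) grid_wide.
exists (fun i => (j i, k i)).
exists (fun p : letter => z p.1 + eps * g * (p.2%:R - (grid_size eps)%:R)) => i /=.
by rewrite addrAC -opprB addrC; apply: k_round.
Qed.

Lemma few_values_of_dF_approx :
  (forall delta, 0 < delta -> exists z : tseries R l, dF x z < delta) ->
  exists (c : 'I_m -> 'I_l) (phi : 'I_l -> R), forall i, phi (c i) = x i.
Proof.
move=> approx.
pose gap := \big[Order.min/1]_(p : 'I_m * 'I_m | x p.1 != x p.2) `|x p.1 - x p.2|.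
have gap_gt0 : 0 < gap by apply/bigmin_gtP; split => // p; rewrite normr_gt0 subr_eq0.
have [|z /(dF_lt_match m_gt0 l_gt0) [j x_near]] := approx (gap / 2).
  by rewrite divr_gt0.
exists j, (fun t => if [pick i | j i == t] is Some i' then x i' else 0) => i.
case: pickP => [i' /eqP ji' | no_pick]; last by have := no_pick i; rewrite eqxx.
apply/eqP; apply: contraT => x_ne.
have gap_le : gap <= `|x i' - x i|.
  exact: bigmin_le_cond _ _ (x_ne : (fun p => x p.1 != x p.2) (i', i)).
suff : `|x i' - x i| < gap by rewrite ltNge gap_le.
have := ler_distD (z (j i)) (x i') (x i); rewrite [`|z _ - x i|]distrC.
by have := x_near i; have := x_near i'; rewrite ji'; lra.
Qed.

Lemma quantize : exists (c : 'I_m -> letter) (phi : letter -> R),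
  forall (z : tseries R l) i, `|phi (c i) - x i| <= eps * dF x z.
Proof.
pose g := inf [set dF x z | z in [set: tseries R l]].
have dists_ne : [set dF x z | z in [set: tseries R l]] !=set0.
  by exists (dF x (fun _ : 'I_l => 0)), (fun _ => 0).
have g_le (z : tseries R l) : g <= dF x z.
  by apply: ge_inf; [exists 0 => _ [z' _ <-]; apply: dF_ge0 | exists z].
have [g_gt0 | g_le0] := ltrP 0 g.
  have [|_ [z0 _ <-] dF_lt] := inf_lt dists_ne (x := 2 * g); first by lra.
  have [c [phi c_err]] := quantize_near g_gt0 dF_lt.
  by exists c, phi => z i; apply: le_trans (c_err i) _; rewrite ler_pM2l ?g_le.
have [|c [phi phiE]] := few_values_of_dF_approx.
  by move=> delta delta_gt0; have [|_ [z _ <-]] := inf_lt dists_ne (x := delta); [lra | exists z].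
exists (fun i => (c i, ord0)), (fun p => phi p.1) => z i /=.
by rewrite phiE subrr normr0 mulr_ge0 ?dF_ge0 // ltW.
Qed.

End Quantize.

Unset Implicit Arguments.

Theorem corollary4p7 (R : realType) (eps : R) (l : nat) :
  0 < eps < 1 -> (0 < l)%N ->
  exists d0 : nat, (0 < d0)%N /\
    forall (m : nat) (x : tseries R m), (0 < m)%N ->
      exists y : tseries R d0,
        forall z : tseries R l,
          (1 - eps) * dF x z <= dF y z /\ dF y z <= (1 + eps) * dF x z.
Proof.
move=> /andP[eps_gt0 _]; case: l => // l _.
pose A := ('I_l.+1 * 'I_(grid_size eps).*2)%type.
exists (key_bound A l.+1); split; first exact: key_bound_gt0.
move=> m x m_gt0; have [c [phi c_err]] := quantize x eps_gt0 m_gt0 (ltn0Sn l).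
pose f k := c (insubd (Ordinal m_gt0) k).
have [w [size_w key_w]] := word_key_pad l.+1 (f 0%N) [seq f k | k <- iota 1 m.-1].
pose g := nth (f 0%N) (f 0%N :: w).
exists (fun i => phi (g i)) => z.
have -> : dF (fun i : 'I_(key_bound A l.+1) => phi (g i)) z = dF (fun i : 'I_m => phi (f i)) z.
  apply: dF_eq_of_word_key => [||M]; rewrite ?key_bound_gt0 //.
  by rewrite -key_w -size_w map_nth_iota ?subn1 //= drop0 take_size.
have f_err (i : 'I_m) : `|phi (f i) - x i| <= eps * dF x z by rewrite /f valKd c_err.
have x_err (i : 'I_m) : `|x i - phi (f i)| <= eps * dF x z by rewrite distrC.
have := dF_perturb z m_gt0 (ltn0Sn l) f_err; have := dF_perturb z m_gt0 (ltn0Sn l) x_err.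
lra.
Qed.
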